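(* Let $H$ be a $P$-free 3-graph on vertex set $V$ containing a copy of $C$ with vertex set $U=\{x_1,x_2,x_3,y_1,y_2,y_3\}$ and edges $\{x_i,y_j,x_k\}$ for $\{i,j,k\}=\{1,2,3\}$, and let $W=V\setminus U$. Then the set $H(U,W)$ of all edges of $H$ meeting both $U$ and $W$ is an intersecting family, i.e. every two edges of $H(U,W)$ share at least one vertex.
   Context: All hypergraphs are 3-uniform. $P$ is the loose 3-uniform path of length 3: vertices $a,b,c,d,e,f,g$, edges $\{a,b,c\},\{c,d,e\},\{e,f,g\}$; $P$-free means no sub-3-graph isomorphic to $P$. $C$ is the loose triangle (three edges pairwise meeting in exactly one vertex, with six vertices in total). *)

From mathcomp Require Import all_boot.
Set Implicit Arguments. Unset Strict Implicit. Unset Printing Implicit Defensive.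

Definition uniform3 (V : finType) (H : {set {set V}}) : Prop :=
  forall e, e \in H -> #|e| = 3.

(* H contains a copy of the loose path P: seven distinct vertices a..g with
   edges {a,b,c}, {c,d,e}, {e,f,g} all in H. *)
Definition contains_P (V : finType) (H : {set {set V}}) : Prop :=
  exists a b c d e f g : V,
    [/\ uniq [:: a; b; c; d; e; f; g],
        [set a; b; c] \in H, [set c; d; e] \in H & [set e; f; g] \in H].

Definition P_free (V : finType) (H : {set {set V}}) : Prop := ~ contains_P H.

Definition crossing (V : finType) (H : {set {set V}}) (U W : {set V}) : {set {set V}} :=
  [set e in H | (e :&: U != set0) && (e :&: W != set0)].

Definition intersecting (V : finType) (F : {set {set V}}) : Prop :=
  forall e f, e \in F -> f \in F -> e :&: f != set0.

From mathcomp Require Import all_boot.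
Set Implicit Arguments. Unset Strict Implicit. Unset Printing Implicit Defensive.

(* Write A1, A2, A3 for the edges of C and U for its vertex set. A crossing edge e
   meets U in one or two vertices. If e meets some A_i in exactly one vertex and
   misses another A_j, then e, A_i, A_j is a copy of P; this rules out every
   trace e :&: U except the pairs {x_i, x_j} and {x_i, y_i}. Two disjoint such
   pairs always meet a common A_i in one vertex each, and then e, A_i, f is a
   copy of P. *)

Lemma card_setI_seq (T : finType) (A : {set T}) (s : seq T) :
  uniq s -> #|A :&: [set:: s]| = count (mem A) s.
Proof.
move=> uniq_s; rewrite -size_filter.
have /card_uniqP <- := filter_uniq (mem A) uniq_s.
by rewrite -cardsE; apply: eq_card => x; rewrite !inE mem_filter andbC.
Qed.

Lemma set3_seq (T : finType) (a b c : T) : [set a; b; c] = [set:: [:: a; b; c]].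
Proof. by apply/setP => v; rewrite !inE orbA. Qed.

Lemma card_setI3 (T : finType) (A : {set T}) (a b c : T) :
  #|[set a; b; c]| = 3 -> #|A :&: [set a; b; c]| = (a \in A) + (b \in A) + (c \in A).
Proof.
rewrite set3_seq cardsE => /card_uniqP uniq_abc.
by rewrite card_setI_seq //= addn0 addnA.
Qed.

Lemma contains_P_of_chain (V : finType) (H : {set {set V}}) (E1 E2 E3 : {set V}) :
  uniform3 H -> E1 \in H -> E2 \in H -> E3 \in H ->
  #|E1 :&: E2| = 1 -> #|E2 :&: E3| = 1 -> E1 :&: E3 = set0 -> contains_P H.
Proof.
move=> uH H1 H2 H3 /eqP/cards1P[c E12] /eqP/cards1P[e E23] E13.
have /setIP[c1 c2] : c \in E1 :&: E2 by rewrite E12 set11.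
have /setIP[e2 e3] : e \in E2 :&: E3 by rewrite E23 set11.
have ce : c != e.
  by apply/eqP => ce; move/setP/(_ c): E13; rewrite !inE c1 ce e3.
have /cards2P[a [b [_ E1c]]] : #|E1 :\ c| == 2.
  by move: (cardsD1 c E1); rewrite c1 (uH _ H1) add1n => -[<-].
have /cards2P[f [g [_ E3e]]] : #|E3 :\ e| == 2.
  by move: (cardsD1 e E3); rewrite e3 (uH _ H3) add1n => -[<-].
have /cards1P[d E2ce] : #|E2 :\ c :\ e| == 1.
  move: (cardsD1 c E2) (cardsD1 e (E2 :\ c)).
  by rewrite c2 (uH _ H2) !inE eq_sym ce e2 !add1n => -[<-] -[<-].
have {E1c}E1E : E1 = [set a; b; c] by rewrite -(setD1K c1) E1c setUC.
have {E3e}E3E : E3 = [set e; f; g] by rewrite -(setD1K e3) E3e setUA.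
have {E2ce}E2E : E2 = [set c; d; e].
  rewrite -(setD1K c2) -(setD1K (_ : e \in E2 :\ c)) ?E2ce; last by rewrite !inE eq_sym ce.
  by rewrite (setUC [set e]) setUA.
exists a, b, c, d, e, f, g; rewrite -E1E -E2E -E3E; split=> //.
apply/card_uniqP; rewrite -cardsE.
have -> : [set:: [:: a; b; c; d; e; f; g]] = E1 :|: E2 :|: E3.
  apply/setP => v; rewrite E1E E2E E3E !inE.
  by case: (v == a); case: (v == b); case: (v == c); case: (v == d);
    case: (v == e); case: (v == f); case: (v == g).
by rewrite cardsU cardsU setIUl E12 E23 E13 set0U !cards1 !uH.
Qed.

Section LooseTriangle.

Variables (V : finType) (H : {set {set V}}) (x1 x2 x3 y1 y2 y3 : V).
Hypothesis uH : uniform3 H.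
Hypothesis uniqU : uniq [:: x1; x2; x3; y1; y2; y3].
Hypotheses (A1H : [set x2; y1; x3] \in H) (A2H : [set x1; y2; x3] \in H)
  (A3H : [set x1; y3; x2] \in H).

Local Notation A1 := [set x2; y1; x3].
Local Notation A2 := [set x1; y2; x3].
Local Notation A3 := [set x1; y3; x2].
Local Notation U := [set x1; x2; x3; y1; y2; y3].

(* e hangs off the triangle: e, A_i, A_j is a loose path for some i, j. *)
Definition hangs (e : {set V}) : bool :=
  let n1 := #|e :&: A1| in let n2 := #|e :&: A2| in let n3 := #|e :&: A3| in
  [|| (n1 == 1) && (n2 * n3 == 0), (n2 == 1) && (n1 * n3 == 0)
    | (n3 == 1) && (n1 * n2 == 0)].

Definition safe_pair (e : {set V}) : bool :=
  [|| (x1 \in e) && (x2 \in e), (x1 \in e) && (x3 \in e), (x2 \in e) && (x3 \in e),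
      (x1 \in e) && (y1 \in e), (x2 \in e) && (y2 \in e) | (x3 \in e) && (y3 \in e)].

Lemma card_setI_U (e : {set V}) :
  #|e :&: U| = (x1 \in e) + (x2 \in e) + (x3 \in e) + (y1 \in e) + (y2 \in e) + (y3 \in e).
Proof.
have -> : U = [set:: [:: x1; x2; x3; y1; y2; y3]] by apply/setP => v; rewrite !inE !orbA.
by rewrite card_setI_seq //= addn0 !addnA.
Qed.

Lemma triangle_edges_meet :
  [/\ #|A1 :&: A2| = 1, #|A2 :&: A3| = 1 & #|A1 :&: A3| = 1].
Proof.
move: uniqU; rewrite /= !inE !negb_or -!andbA.
do !case/andP => ?; move=> _.
rewrite [A1 :&: _]setIC [A2 :&: _]setIC !card_setI3 ?uH // !inE.
by repeat match goal with h : is_true (?a != ?b) |- _ =>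
  rewrite ?(negbTE h) ?(etrans (eq_sym b a) (negbTE h)) ?eqxx; clear h end.
Qed.

Lemma hangs_contains_P (e : {set V}) : e \in H -> hangs e -> contains_P H.
Proof.
move=> eH; have [m12 m23 m13] := triangle_edges_meet.
have path A B : A \in H -> B \in H ->
    #|e :&: A| = 1 -> #|A :&: B| = 1 -> #|e :&: B| = 0 -> contains_P H.
  by move=> AH BH eA AB /cards0_eq; apply: contains_P_of_chain uH eH AH BH eA AB.
rewrite /hangs !muln_eq0 => /or3P[] /andP[/eqP e1 /orP[] /eqP e0].
- exact: path A1H A2H e1 m12 e0.
- exact: path A1H A3H e1 m13 e0.
- by apply: path A2H A1H e1 _ e0; rewrite setIC.
- exact: path A2H A3H e1 m23 e0.
- by apply: path A3H A1H e1 _ e0; rewrite setIC.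
- by apply: path A3H A2H e1 _ e0; rewrite setIC.
Qed.

Lemma crossing_edge_card (e : {set V}) :
  e \in H -> e :&: U != set0 -> e :&: ~: U != set0 -> 0 < #|e :&: U| <= 2.
Proof.
move=> eH; rewrite -!card_gt0 => -> /= outside.
by rewrite -ltnS -(uH eH) -(cardsID U e) setDE -addn1 leq_add2l.
Qed.

Lemma crossing_edge_shape (e : {set V}) :
  0 < #|e :&: U| <= 2 -> hangs e || safe_pair e.
Proof.
rewrite /hangs /safe_pair card_setI_U !card_setI3 ?uH //.
move: (x1 \in e) (x2 \in e) (x3 \in e) (y1 \in e) (y2 \in e) (y3 \in e).
by do 6!case.
Qed.

Lemma safe_pairs_contains_P (e f : {set V}) : e \in H -> f \in H -> e :&: f = set0 ->
  #|e :&: U| <= 2 -> #|f :&: U| <= 2 -> safe_pair e -> safe_pair f -> contains_P H.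
Proof.
move=> eH fH ef0 e2 f2 pe pf.
have path A : A \in H -> #|e :&: A| = 1 -> #|f :&: A| = 1 -> contains_P H.
  by move=> AH eA fA; apply: contains_P_of_chain uH eH AH fH eA _ ef0; rewrite setIC.
have disj v : (v \in e) && (v \in f) = false by rewrite -in_setI ef0 in_set0.
have : [|| (#|e :&: A1| == 1) && (#|f :&: A1| == 1), (#|e :&: A2| == 1) && (#|f :&: A2| == 1)
         | (#|e :&: A3| == 1) && (#|f :&: A3| == 1)].
  move: e2 pe f2 pf (disj x1) (disj x2) (disj x3) (disj y1) (disj y2) (disj y3).
  rewrite /safe_pair !card_setI_U !card_setI3 ?uH //.
  move: (x1 \in f) (x2 \in f) (x3 \in f) (y1 \in f) (y2 \in f) (y3 \in f).
  move: (x1 \in e) (x2 \in e) (x3 \in e) (y1 \in e) (y2 \in e) (y3 \in e).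
  by do 6!case=> //; do 6!case.
case/or3P => /andP[/eqP eA /eqP fA]; [exact: path A1H eA fA | exact: path A2H eA fA
                                      | exact: path A3H eA fA].
Qed.

End LooseTriangle.

Theorem mainTheorem8 (V : finType) (H : {set {set V}})
    (x1 x2 x3 y1 y2 y3 : V) :
  uniform3 H -> P_free H ->
  uniq [:: x1; x2; x3; y1; y2; y3] ->
  [set x2; y1; x3] \in H -> [set x1; y2; x3] \in H -> [set x1; y3; x2] \in H ->
  intersecting (crossing H [set x1; x2; x3; y1; y2; y3]
                          (~: [set x1; x2; x3; y1; y2; y3])).
Proof.
move=> uH PF uniqU A1H A2H A3H e f.
rewrite !inE => /and3P[eH eU eW] /and3P[fH fU fW].
apply/negP => /eqP ef0; apply: PF.
have ce := crossing_edge_card uH eH eU eW.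
have cf := crossing_edge_card uH fH fU fW.
have [|pe] := orP (crossing_edge_shape uH uniqU A1H A2H A3H ce).
  exact: hangs_contains_P.
have [|pf] := orP (crossing_edge_shape uH uniqU A1H A2H A3H cf).
  exact: hangs_contains_P.
have [[_ e2] [_ f2]] := (andP ce, andP cf).
exact: safe_pairs_contains_P eH fH ef0 e2 f2 pe pf.
Qed.
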